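(* Let $L'$ be a finite $0$-distributive lattice with exactly $n$ atoms. Then there exists a blow-up $L^B$ of the Boolean lattice $L\cong\mathbf{2}^n$ such that the zero-divisor graphs $G(L')$ and $G(L^B)$ are isomorphic (indeed the chain replacing an element of $L$ has as many elements as the corresponding $\sim$-class of $L'$).
   Context: A lattice $M$ with $0$ is $0$-distributive if $a\wedge b=0$ and $a\wedge c=0$ imply $a\wedge(b\vee c)=0$. For a lattice $M$ with $0$, $a^{\perp}=\{b: a\wedge b=0\}$, $x\sim y$ iff $x^\perp=y^\perp$, $[x]$ is the class of $x$, and $[M]$ is the set of classes ordered by $[a]\le[b]$ iff $b^{\perp}\subseteq a^{\perp}$. The zero-divisor graph $G(M)$ has as vertices the nonzero $a\in M$ with $a\wedge b=0$ for some nonzero $b$, distinct $a,b$ adjacent iff $a\wedge b=0$. Blow-up: for $L\cong\mathbf{2}^n$, replace each $a\in L\setminus\{0,1\}$ by a finite chain $C_a$: $a=a^1\lessdot\cdots\lessdot a^{k_a}$, keep $0,1$; elements in one chain are ordered along it, and for $u\in C_a,v\in C_b$ with $a\ne b$ ($C_0=\{0\},C_1=\{1\}$), $u\le v$ iff $a<b$ in $L$. *)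

From HB Require Import structures.
From mathcomp Require Import all_boot all_order.
Set Implicit Arguments. Unset Strict Implicit. Unset Printing Implicit Defensive.
Import Order.TTheory.
Local Open Scope order_scope.

Section LatticeDefs.
Context {d : Order.disp_t} {L : finTBLatticeType d}.

Definition perp (a b : L) : bool := a `&` b == \bot.

Definition zero_distributive : Prop :=
  forall a b c : L, perp a b -> perp a c -> perp a (b `|` c).

Definition is_atom (a : L) : bool :=
  (a != \bot) && [forall b : L, (\bot < b) && (b <= a) ==> (b == a)].

Definition sim (x y : L) : bool := [forall z : L, perp x z == perp y z].

Definition cls_le (x y : L) : Prop := forall z : L, perp y z -> perp x z.

Definition cls (x : L) : {set L} := [set y | sim x y].

Definition zd_vertex (a : L) : Prop := a != \bot /\ exists b : L, b != \bot /\ perp a b.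
Definition zd_adj (a b : L) : Prop := a <> b /\ perp a b.
End LatticeDefs.

(* ---------- Blow-up of the Boolean lattice 2^n = {set 'I_n} ----------
   k A is the length of the chain C_A replacing A (for A <> 0,1).
   The element A^(i+1) of C_A is encoded as (A, i) with i < k A;
   0 = (set0, 0), 1 = (setT, 0). *)
Definition bu_valid (n : nat) (k : {set 'I_n} -> nat) (p : {set 'I_n} * nat) : bool :=
  if (p.1 == set0) || (p.1 == setT) then p.2 == 0 else (p.2 < k p.1)%N.

Definition blowup (n : nat) (k : {set 'I_n} -> nat) := {p | bu_valid k p}.

Section BlowupDefs.
Variables (n : nat) (k : {set 'I_n} -> nat).

Definition bu_le (u v : blowup k) : Prop :=
  ((val u).1 = (val v).1 /\ ((val u).2 <= (val v).2)%N)
  \/ ((val u).1 \proper (val v).1).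

Definition bu_is_zero (u : blowup k) : Prop := (val u).1 = set0.

Definition bu_perp (u v : blowup k) : Prop :=
  forall z : blowup k, bu_le z u -> bu_le z v -> bu_is_zero z.

Definition bu_vertex (u : blowup k) : Prop :=
  ~ bu_is_zero u /\ exists v : blowup k, ~ bu_is_zero v /\ bu_perp u v.
Definition bu_adj (u v : blowup k) : Prop := u <> v /\ bu_perp u v.
End BlowupDefs.

From HB Require Import structures.
From mathcomp Require Import all_boot all_order.
From Stdlib Require Import ProofIrrelevance.
Import Order.TTheory.
Set Implicit Arguments. Unset Strict Implicit. Unset Printing Implicit Defensive.

(* Send x to its support, the set of atoms below it.  Since every nonzero
   element lies above an atom, x /\ y = 0 exactly when the supports are
   disjoint, hence x ~ y exactly when the supports agree; and 0-distributivity
   makes an atom a orthogonal to any join of atoms other than a, so every set of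
   atoms is a support.  Thus [L'] ~= 2^n.  In a blow-up, u /\ v = 0 exactly when
   the underlying elements of 2^n are disjoint (otherwise the bottom of the chain
   over their meet is a nonzero common lower bound), so listing each class [x]
   along the chain C_[x] is an isomorphism of zero-divisor graphs. *)

Section SigBijection.
Variables (A B : Type) (P : A -> Prop) (Q : B -> Prop) (f : A -> B) (g : B -> A).
Hypotheses (fP : forall a, P a -> Q (f a)) (gP : forall b, Q b -> P (g b)).
Hypotheses (fK : forall a, P a -> g (f a) = a) (gK : forall b, Q b -> f (g b) = b).

Definition sig_map (x : sig P) : sig Q :=
  exist Q (f (proj1_sig x)) (fP (proj2_sig x)).

Lemma sig_map_bij : bijective sig_map.
Proof.
exists (fun y => exist P (g (proj1_sig y)) (gP (proj2_sig y))) => [[a Pa]|[b Qb]] /=.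
  exact/ProofIrrelevanceTheory.subset_eq_compat/fK.
exact/ProofIrrelevanceTheory.subset_eq_compat/gK.
Qed.

End SigBijection.

Section Fibres.
Variables (T : finType) (U : eqType) (p : T -> U).

Definition fibre (A : U) : seq T := enum [set y | p y == A].
Definition fibre_rank (x : T) : nat := index x (fibre (p x)).

Lemma mem_fibre A y : (y \in fibre A) = (p y == A).
Proof. by rewrite mem_enum inE. Qed.

Lemma size_fibre A : size (fibre A) = #|[set y | p y == A]|.
Proof. by rewrite cardE. Qed.

Lemma fibre_rank_lt x : fibre_rank x < size (fibre (p x)).
Proof. by rewrite index_mem mem_fibre. Qed.

Lemma nth_fibre_rank x0 x : nth x0 (fibre (p x)) (fibre_rank x) = x.
Proof. by rewrite nth_index // mem_fibre. Qed.

Lemma fibre_nth x0 A i : i < size (fibre A) -> p (nth x0 (fibre A) i) = A.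
Proof. by move=> lt_i; apply/eqP; rewrite -mem_fibre mem_nth. Qed.

Lemma fibre_rank_nth x0 A i :
  i < size (fibre A) -> fibre_rank (nth x0 (fibre A) i) = i.
Proof. by move=> lt_i; rewrite /fibre_rank fibre_nth // index_uniq ?enum_uniq. Qed.

End Fibres.

Section Blowup.
Variables (n : nat) (k : {set 'I_n} -> nat).

Lemma bu_validE (A : {set 'I_n}) i :
  A != set0 -> A != setT -> bu_valid k (A, i) = (i < k A).
Proof. by move=> /negbTE A0 /negbTE AT; rewrite /bu_valid /= A0 AT. Qed.

Lemma bu_le_sub (u v : blowup k) : bu_le u v -> (val u).1 \subset (val v).1.
Proof. by case=> [[-> _]|/proper_sub]. Qed.

Lemma bu_top_valid : bu_valid k (setT, 0).
Proof. by rewrite /bu_valid eqxx orbT. Qed.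

Definition bu_top : blowup k := exist _ (setT, 0) bu_top_valid.

Hypothesis k_gt0 : forall A : {set 'I_n}, A != set0 -> A != setT -> 0 < k A.

Lemma bu_base_valid (A : {set 'I_n}) : bu_valid k (A, 0).
Proof. by rewrite /bu_valid /=; case: ifP => // /norP[A0 AT]; apply: k_gt0. Qed.

Definition bu_base (A : {set 'I_n}) : blowup k := exist _ (A, 0) (bu_base_valid A).

Lemma bu_base_le (A : {set 'I_n}) (u : blowup k) :
  A \subset (val u).1 -> bu_le (bu_base A) u.
Proof. by rewrite subEproper => /predU1P[eqA | ltA]; [left | right]. Qed.

Lemma bu_perpP (u v : blowup k) :
  reflect (bu_perp u v) ((val u).1 :&: (val v).1 == set0).
Proof.
apply: (iffP eqP) => [disj z /bu_le_sub zu /bu_le_sub zv | perp_uv].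
  by apply/eqP; rewrite -subset0 -disj subsetI zu zv.
by apply: (perp_uv (bu_base _)); apply: bu_base_le; rewrite ?subsetIl ?subsetIr.
Qed.

Lemma bu_vertexP (u : blowup k) :
  bu_vertex u <-> (val u).1 != set0 /\ (val u).1 != setT.
Proof.
split=> [[/eqP u_nz [v [v_nz /bu_perpP uv_disj]]] | [u_nz u_nT]].
  split=> //; apply/eqP => uT; apply: v_nz.
  by move: uv_disj; rewrite uT setTI => /eqP.
split; first exact/eqP.
exists (bu_base (~: (val u).1)); split; last by apply/bu_perpP; rewrite setICr.
rewrite /bu_is_zero /= => comp0; apply: (negP u_nT).
by rewrite -[_.1]setCK comp0 setC0.
Qed.

End Blowup.

Local Open Scope order_scope.

Section AtomSupport.
Context {d : Order.disp_t} {L : finTBLatticeType d}.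
Implicit Types x y : L.

Lemma perpC x y : perp x y = perp y x.
Proof. by rewrite /perp meetC. Qed.

(* A nonzero element below x with the fewest strict lower bounds is an atom. *)
Lemma exists_atom_le x : x != \bot -> exists2 a, is_atom a & a <= x.
Proof.
move=> x_nz; pose down (b : L) := #|[set y | y < b]|.
have [a /andP[a_nz a_le_x] a_min] :=
  arg_minnP down (P := fun b => (b != \bot) && (b <= x))
    (introT andP (conj x_nz (lexx x))).
exists a => //; rewrite /is_atom a_nz; apply/forallP => b; apply/implyP.
case/andP=> b_gt0 b_le_a; apply: contraT => b_ne_a.
have b_lt_a : b < a by rewrite lt_neqAle b_ne_a.
have down_lt : (down b < down a)%N.
  apply: proper_card; apply/properP; split; last by exists b; rewrite !inE ?ltxx.
  by apply/subsetP => y; rewrite !inE => /lt_trans; apply.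
by move: down_lt; rewrite ltnNge a_min // -lt0x b_gt0 (le_trans b_le_a).
Qed.

Definition atoms : {set L} := [set a | is_atom a].
Definition atom_of (i : 'I_#|atoms|) : L := enum_val i.
Definition atom_support x : {set 'I_#|atoms|} := [set i | atom_of i <= x].

Lemma atom_ofP i : is_atom (atom_of i).
Proof. by have := enum_valP i; rewrite inE. Qed.

Lemma atom_of_nz i : atom_of i != \bot.
Proof. by case/andP: (atom_ofP i). Qed.

Lemma atom_of_onto a : is_atom a -> exists i, atom_of i = a.
Proof.
move=> a_atom; have a_in : a \in atoms by rewrite inE.
by exists (enum_rank_in a_in a); rewrite /atom_of enum_rankK_in.
Qed.

Lemma atom_of_le i j : atom_of i <= atom_of j -> i = j.
Proof.
case/andP: (atom_ofP j) => _ /forallP/(_ (atom_of i)) atom_j le_ij.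
apply: enum_val_inj; apply/eqP; apply: (implyP atom_j).
by rewrite le_ij lt0x atom_of_nz.
Qed.

Lemma atom_support1 i : atom_support (atom_of i) = [set i].
Proof.
by apply/setP => j; rewrite !inE; apply/idP/eqP => [/atom_of_le | ->].
Qed.

Lemma exists_atom_support x : x != \bot -> exists i, i \in atom_support x.
Proof.
move=> /exists_atom_le[a /atom_of_onto[i <-] le_ix].
by exists i; rewrite inE.
Qed.

Lemma atom_support_eq0 x : (atom_support x == set0) = (x == \bot).
Proof.
apply/idP/eqP => [/eqP supp0 | ->].
  by apply: contraTeq isT => /exists_atom_support[i]; rewrite supp0 inE.
by apply/eqP/setP => i; rewrite !inE lex0 (negbTE (atom_of_nz i)).
Qed.

Lemma atom_support_meet x y :
  atom_support (x `&` y) = atom_support x :&: atom_support y.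
Proof. by apply/setP => i; rewrite !inE lexI. Qed.

Lemma perp_supportE x y :
  perp x y = (atom_support x :&: atom_support y == set0).
Proof. by rewrite -atom_support_meet atom_support_eq0. Qed.

Lemma perp_atom_of i x : perp (atom_of i) x = (i \notin atom_support x).
Proof. by rewrite perp_supportE atom_support1 setI_eq0 disjoints1. Qed.

Lemma simP x y : reflect (atom_support x = atom_support y) (sim x y).
Proof.
apply: (iffP forallP) => [sim_xy | supp_xy z]; last first.
  by rewrite !perp_supportE supp_xy.
apply/setP => i; have /eqP := sim_xy (atom_of i).
by rewrite ![perp _ (atom_of i)]perpC !perp_atom_of => /negb_inj.
Qed.

Lemma cls_le_subset x y : cls_le x y <-> atom_support x \subset atom_support y.
Proof.
split=> [le_xy | sub_xy z]; last first.
  by rewrite !perp_supportE -!subset0; apply: subset_trans; apply: setSI.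
apply/subsetP => i; apply: contraLR; rewrite -!perp_atom_of ![perp (atom_of i) _]perpC.
exact: le_xy.
Qed.

Lemma cls_supportE x : cls x = [set y | atom_support y == atom_support x].
Proof. by apply/setP => y; rewrite !inE; apply/simP/eqP. Qed.

Lemma zd_vertexE x :
  zd_vertex x <-> atom_support x != set0 /\ atom_support x != setT.
Proof.
rewrite /zd_vertex atom_support_eq0.
split=> [[x_nz [y [y_nz perp_xy]]] | [x_nz x_nT]].
  split=> //; apply: contraNneq y_nz => xT.
  by move: perp_xy; rewrite perp_supportE xT setTI atom_support_eq0.
have /subsetPn[i _ i_notin] : ~~ (setT \subset atom_support x) by rewrite subTset.
split=> //; exists (atom_of i).
by rewrite atom_of_nz perpC perp_atom_of.
Qed.

Hypothesis zero_distr : zero_distributive (L := L).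

Lemma atom_support_join (A : {set 'I_#|atoms|}) :
  atom_support (\join_(i in A) atom_of i) = A.
Proof.
apply/setP => j; rewrite inE; apply/idP/idP => [le_j | j_in]; last first.
  exact: joins_sup.
apply: contraLR le_j => j_notin.
have : perp (atom_of j) (\join_(i in A) atom_of i).
  apply: (big_ind (perp (atom_of j))) => [|x y|i i_in].
  - by rewrite /perp meetx0.
  - exact: zero_distr.
  - by rewrite perp_atom_of atom_support1 inE; apply: contraNneq j_notin => ->.
by rewrite perp_atom_of inE.
Qed.

Lemma atom_support_onto (A : {set 'I_#|atoms|}) : exists x, atom_support x = A.
Proof. by exists (\join_(i in A) atom_of i); apply: atom_support_join. Qed.

End AtomSupport.

Section GraphIsomorphism.
Context {d : Order.disp_t} {L : finTBLatticeType d}.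
Hypothesis zero_distr : zero_distributive (L := L).

Definition class_size (A : {set 'I_#|atoms (L := L)|}) : nat :=
  size (fibre atom_support A).

Definition zd_to_bu (x : L) : blowup class_size :=
  insubd (bu_top class_size) (atom_support x, fibre_rank atom_support x).

Definition bu_to_zd (u : blowup class_size) : L :=
  nth \bot (fibre atom_support (val u).1) (val u).2.

Lemma class_size_gt0 A : (0 < class_size A)%N.
Proof.
have [x <-] := atom_support_onto zero_distr A.
by rewrite /class_size size_fibre card_gt0; apply/set0Pn; exists x; rewrite inE.
Qed.

Let class_size_pos A (_ : A != set0) (_ : A != setT) := class_size_gt0 A.

Lemma val_zd_to_bu x :
  zd_vertex x -> val (zd_to_bu x) = (atom_support x, fibre_rank atom_support x).
Proof.
case/zd_vertexE => x_nz x_nT; apply: insubdK.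
by rewrite -[_ \in _]/(bu_valid _ _) bu_validE // fibre_rank_lt.
Qed.

Lemma bu_to_zd_rank (u : blowup class_size) :
  bu_vertex u -> ((val u).2 < class_size (val u).1)%N.
Proof.
case/(bu_vertexP class_size_pos) => u_nz u_nT.
by rewrite -(bu_validE class_size) // -surjective_pairing; apply: valP.
Qed.

Lemma atom_support_bu_to_zd (u : blowup class_size) :
  bu_vertex u -> atom_support (bu_to_zd u) = (val u).1.
Proof. by move/bu_to_zd_rank; apply: fibre_nth. Qed.

Lemma zd_to_bu_vertex x : zd_vertex x -> bu_vertex (zd_to_bu x).
Proof.
move=> vx; apply/(bu_vertexP class_size_pos).
by rewrite val_zd_to_bu //; apply/zd_vertexE.
Qed.

Lemma bu_to_zd_vertex (u : blowup class_size) :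
  bu_vertex u -> zd_vertex (bu_to_zd u).
Proof.
move=> vu; apply/zd_vertexE.
by rewrite atom_support_bu_to_zd //; apply/(bu_vertexP class_size_pos).
Qed.

Lemma zd_to_buK x : zd_vertex x -> bu_to_zd (zd_to_bu x) = x.
Proof. by move=> vx; rewrite /bu_to_zd val_zd_to_bu // nth_fibre_rank. Qed.

Lemma bu_to_zdK (u : blowup class_size) :
  bu_vertex u -> zd_to_bu (bu_to_zd u) = u.
Proof.
move=> vu; apply: val_inj; rewrite val_zd_to_bu; last exact: bu_to_zd_vertex.
rewrite atom_support_bu_to_zd // fibre_rank_nth ?bu_to_zd_rank //.
exact/esym/surjective_pairing.
Qed.

Lemma zd_adj_bu x y :
  zd_vertex x -> zd_vertex y -> zd_adj x y <-> bu_adj (zd_to_bu x) (zd_to_bu y).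
Proof.
move=> vx vy; rewrite /zd_adj /bu_adj perp_supportE.
split=> [[ne_xy disj] | [ne_xy /(bu_perpP class_size_pos) disj]]; split.
- by apply: contra_not ne_xy => /(congr1 bu_to_zd); rewrite !zd_to_buK.
- by apply/(bu_perpP class_size_pos); rewrite !val_zd_to_bu.
- by apply: contra_not ne_xy => ->.
- by move: disj; rewrite !val_zd_to_bu.
Qed.

End GraphIsomorphism.

Close Scope order_scope.

Theorem mainTheorem4 (d : Order.disp_t) (L : finTBLatticeType d) (n : nat) :
  zero_distributive (L := L) ->
  #|[set a : L | is_atom a]| = n ->
  exists k : {set 'I_n} -> nat,
    (forall A : {set 'I_n}, A != set0 -> A != setT -> 0 < k A) /\
    (exists f : {x : L | zd_vertex x} -> {u : blowup k | bu_vertex u},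
        bijective f /\
        forall x y : {x : L | zd_vertex x}, zd_adj (proj1_sig x) (proj1_sig y) <-> bu_adj (proj1_sig (f x)) (proj1_sig (f y))) /\
    (exists phi : L -> {set 'I_n},
        (forall x y : L, phi x = phi y <-> sim x y) /\
        (forall A : {set 'I_n}, exists x : L, phi x = A) /\
        (forall x y : L, phi x \subset phi y <-> cls_le x y) /\
        (forall x : L, phi x != set0 -> phi x != setT ->
                       k (phi x) = #|cls x|)).
Proof.
move=> zero_distr <-; exists (class_size (L := L)); split.
  by move=> A _ _; apply: class_size_gt0.
split.
  exists (sig_map (zd_to_bu_vertex zero_distr)); split.
    exact: sig_map_bij (bu_to_zd_vertex zero_distr) zd_to_buK
                       (bu_to_zdK zero_distr).
  by move=> [x vx] [y vy]; apply: zd_adj_bu.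
exists atom_support; split; first by move=> x y; split=> /simP.
split; first exact: atom_support_onto.
split; first by move=> x y; apply: iff_sym; apply: cls_le_subset.
by move=> x _ _; rewrite /class_size size_fibre cls_supportE.
Qed.
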